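(* Let $r\ge1$ and $\mu>0$. The holomorphic map $f:M_{\Delta^r}(\mu)\to\ell^2(\mathbb C)$, $f(z,w)=(\psi_1,\dots,\psi_r,\Psi)$, where for $j=1,\dots,r$ $$\psi_j=\sqrt\mu\left(z_j,\frac{z_j^2}{\sqrt2},\dots,\frac{z_j^k}{\sqrt k},\dots\right),$$ and $\Psi$ has components indexed by $k=(k_1,\dots,k_r)\in\mathbb Z_{\ge0}^r$ and $a\in\mathbb Z_{\ge1}$ given by $$\frac1{\sqrt a}\sqrt{\binom{\mu a+k_1-1}{k_1}\cdots\binom{\mu a+k_r-1}{k_r}}\;z_1^{k_1}\cdots z_r^{k_r}w^a,$$ satisfies $\sum_j|f_j(z,w)|^2=-\log\left(\prod_{j=1}^r(1-|z_j|^2)^\mu-|w|^2\right)$; in particular $f^*\omega_0=\omega_{\Delta^r}(\mu)$.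
   Context: $M_{\Delta^r}(\mu)=\{(z,w)\in\Delta^r\times\mathbb C:|w|^2<\prod_{j=1}^r(1-|z_j|^2)^\mu\}$ with Kähler metric $\omega_{\Delta^r}(\mu)=\frac i2\partial\bar\partial\left(-\log\left(\prod_{j}(1-|z_j|^2)^\mu-|w|^2\right)\right)$. $\ell^2(\mathbb C)$ is the Hilbert space of square-summable complex sequences with flat Kähler form $\omega_0=\frac i2\partial\bar\partial\sum_j|x_j|^2$. Binomial coefficients with non-integer top entry are generalized: $\binom{x}{k}=x(x-1)\cdots(x-k+1)/k!$. *)

From HB Require Import structures.
From mathcomp Require Import all_boot all_order all_algebra.
From mathcomp Require Import all_classical all_reals.
From mathcomp Require Import ereal esum exp.
From mathcomp Require Import complex.
Set Implicit Arguments. Unset Strict Implicit. Unset Printing Implicit Defensive.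
Import Order.TTheory GRing.Theory Num.Theory.
Local Open Scope ring_scope.
Local Open Scope complex_scope.

Definition cabs2 (R : rcfType) (z : R[i]) : R := complex.Re z ^+ 2 + complex.Im z ^+ 2.

Definition gbinom (R : fieldType) (x : R) (k : nat) : R :=
  (\prod_(i < k) (x - i%:R)) / (k`!)%:R.

Definition in_M (R : realType) (r : nat) (mu : R) (z : 'I_r -> R[i]) (w : R[i]) :=
  (forall j, cabs2 (z j) < 1) /\
  cabs2 w < \prod_(j < r) (1 - cabs2 (z j)) `^ mu.

(* Index set of the components of f:
   inl (j, m)  : the m-th component (m = 0,1,... corresponds to k = m+1) of psi_j;
   inr (k, b)  : the component of Psi indexed by k in Z_{>=0}^r and a = b+1. *)
Definition fidx (r : nat) : Type := ('I_r * nat) + ({ffun 'I_r -> nat} * nat).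

Definition f_emb (R : realType) (r : nat) (mu : R) (z : 'I_r -> R[i]) (w : R[i])
    (i : fidx r) : R[i] :=
  match i with
  | inl (j, m) =>
      (Num.sqrt mu / Num.sqrt (m.+1)%:R)%:C * z j ^+ m.+1
  | inr (k, b) =>
      let a := b.+1 in
      ((Num.sqrt (a%:R))^-1 *
        Num.sqrt (\prod_(j < r) gbinom (mu * a%:R + (k j)%:R - 1) (k j)))%:C
      * (\prod_(j < r) z j ^+ k j) * w ^+ a
  end.

(* The sum of the squared moduli of the components of f splits, along the two
   kinds of components (psi_j and Psi), into two families of nonnegative
   series, each of which is summed in closed form by a classical power series
   on [0, 1):
   - the logarithmic series   sum_(m >= 1) t^m / m         = - ln (1 - t),
   - the binomial series      sum_(n >= 0) binom(s+n-1, n) t^n = (1 - t)^(-s)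
     (for s > 0).
   Both are established the same way: the power series converges on [0, 1)
   by a ratio test, and a suitable combination with the expected closed form
   has zero derivative on [0, 1), hence is constant.
   With x_j = |z_j|^2, P = prod_j (1 - x_j)^mu and t = |w|^2 / P, the psi
   components then sum to  mu * sum_j - ln (1 - x_j) = - ln P, while for fixed
   a >= 1 the Psi components of level a sum (a product of r binomial series with
   s = mu a) to t^a / a, so that all Psi components sum to - ln (1 - t).
   Finally - ln P - ln (1 - t) = - ln (P - |w|^2).
   The file develops, in order: real series and a ratio test, power series on
   [0, 1), the two classical series, bookkeeping lemmas on sums of nonnegative
   extended reals (\esum), the squared modulus, and the two partial sums. *)

From HB Require Import structures.
From mathcomp Require Import all_boot all_order all_algebra.
From mathcomp Require Import all_classical all_reals.
From mathcomp Require Import ereal esum exp.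
From mathcomp Require Import complex.
From mathcomp Require Import topology normedtype sequences derive realfun.
From mathcomp Require Import ring lra.
From mathcomp Require finmap.
Set Implicit Arguments. Unset Strict Implicit. Unset Printing Implicit Defensive.
Import Order.TTheory GRing.Theory Num.Theory.
Import numFieldNormedType.Exports.
Local Open Scope classical_set_scope.
Local Open Scope ring_scope.

Section RealSeries.
Variable R : realType.

(* Ratio test: if (n+1) u_(n+1) <= K (a + n) u_n with K < 1, then the ratios
   u_(n+1)/u_n are eventually below q = (1+K)/2 < 1, so the series converges
   by comparison with a geometric series. *)
Lemma cvg_series_ratio (u : R^nat) (K a : R) :
  (forall n, 0 <= u n) -> 0 <= K -> K < 1 -> 0 <= a ->
  (forall n, (1 <= n)%N -> n.+1%:R * u n.+1 <= K * (a + n%:R) * u n) ->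
  cvgn (series u).
Proof.
move=> u0 K0 K1 a0 ratio.
pose q := (1 + K) / 2.
have q0 : 0 < q by rewrite /q; lra.
have q1 : q < 1 by rewrite /q; lra.
have qK : 0 < q - K by rewrite /q; lra.
pose N := (Num.Def.archi_bound (K * a / (q - K))).+1.
have KaN : K * a <= (q - K) * N%:R.
  have h0 : 0 <= K * a / (q - K) by rewrite divr_ge0 ?mulr_ge0 // ltW.
  rewrite -ler_pdivrMl // mulrC; apply: ltW.
  by apply: lt_le_trans (archi_boundP h0) _; rewrite ler_nat.
have geom_step n : (N <= n)%N -> u n.+1 <= q * u n.
  move=> Nn; have n_ge1 : (1 <= n)%N by apply: leq_trans Nn.
  have := ratio n n_ge1.
  have KaN' : K * a <= (q - K) * n%:R.
    by apply: le_trans KaN (ler_wpM2l (ltW qK) _); rewrite ler_nat.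
  have Kq : K * (a + n%:R) <= n.+1%:R * q by rewrite -addn1 natrD; nra.
  move=> Hn; rewrite -(@ler_pM2l _ n.+1%:R) ?ltr0n // mulrA.
  by apply: le_trans Hn _; rewrite ler_wpM2r.
pose S := \sum_(i < N.+1) u i.
have u_le_S n : (n <= N)%N -> u n <= S.
  move=> nN; rewrite /S (bigD1 (Ordinal (nN : (n < N.+1)%N))) //=.
  by rewrite lerDl sumr_ge0.
have u_geom k : u (N + k)%N <= q ^+ k * u N.
  elim: k => [|k IH]; first by rewrite addn0 expr0 mul1r.
  rewrite addnS exprS -mulrA; apply: le_trans (geom_step _ (leq_addr _ _)) _.
  by rewrite ler_wpM2l // ltW.
pose C := S / q ^+ N.
have qN0 : 0 < q ^+ N by rewrite exprn_gt0.
apply: (@series_le_cvg _ _ (fun n => C * q ^+ n)) => [//|n|n|].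
- apply: mulr_ge0; last exact: exprn_ge0 (ltW q0).
  by apply: divr_ge0; [exact: sumr_ge0 | exact: ltW].
- case: (leqP n N) => nN.
    apply: le_trans (u_le_S _ nN) _.
    rewrite /C mulrAC ler_pdivlMr // ler_wpM2l ?sumr_ge0 //.
    by rewrite ler_wiXn2l // ?ltW.
  rewrite -(subnKC (ltnW nN)); apply: le_trans (u_geom _) _.
  rewrite /C exprD [q ^+ N * _]mulrC mulrCA divfK ?gt_eqF //.
  by apply: ler_wpM2l; [exact: exprn_ge0 (ltW q0) | exact: u_le_S].
- by apply: is_cvg_geometric_series; rewrite ger0_norm ?ltW.
Qed.

Lemma esum_nat_lim (u : R^nat) : (forall n, 0 <= u n) -> cvgn (series u) ->
  (\esum_(i in [set: nat]%classic) (u i)%:E)%E = (limn (series u))%:E.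
Proof.
move=> u0 cu; rewrite -nneseries_esumT; last by move=> n; rewrite lee_fin.
rewrite -EFin_lim //; congr (limn _); apply/funext => n /=.
by rewrite sumEFin.
Qed.

Lemma series_drop0 (u : R^nat) : u 0%N = 0 -> cvgn (series u) ->
  cvgn (series (fun m => u m.+1)) /\
  limn (series (fun m => u m.+1)) = limn (series u).
Proof.
move=> u00 cu.
have shift : series (fun m => u m.+1) = (fun n => series u n.+1).
  apply/funext => n; rewrite /series /= big_nat_recl // u00 add0r.
  by apply: eq_bigr.
have cv : series (fun m => u m.+1) @ \oo --> limn (series u).
  by rewrite shift cvg_shiftS.
by split; [exact: cvgP cv | exact: cvg_lim cv].
Qed.

End RealSeries.

Section PowerSeriesOnUnitInterval.
Variable R : realType.

Definition pseries_cvg01 (c : R^nat) : Prop :=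
  forall K, 0 <= K < 1 -> cvgn (pseries c K).

Lemma pseries_at0 (c : R^nat) : limn (pseries c 0) = c 0%N.
Proof.
apply/cvg_lim => //; apply: cvg_near_cst; near=> n.
have n_gt0 : (0 < n)%N by near: n; exists 1%N.
rewrite /pseries /series /= big_ltn // expr0 mulr1 big_nat_cond big1 ?addr0 //.
by move=> i /andP[/andP[i1 _] _]; rewrite expr0n gtn_eqF // mulr0.
Unshelve. all: by end_near.
Qed.

Lemma pseries_derive01 (c : R^nat) :
  pseries_cvg01 c -> pseries_cvg01 (pseries_diffs c) ->
  pseries_cvg01 (pseries_diffs (pseries_diffs c)) ->
  forall x : R, 0 <= x < 1 ->
  is_derive x (1 : R) (fun x => limn (pseries c x))
    (limn (pseries (pseries_diffs c) x)).
Proof.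
move=> c1 c2 c3 x /andP[x0 x1].
have hK : 0 <= (1 + x) / 2 < 1 by apply/andP; split; lra.
apply: (pseries_snd_diffs (c1 _ hK) (c2 _ hK) (c3 _ hK)).
by rewrite !ger0_norm //; lra.
Qed.

Lemma derive0_const01 (f : R -> R) :
  (forall x : R, 0 <= x < 1 -> is_derive x (1 : R) f 0) ->
  forall t : R, 0 <= t < 1 -> f t = f 0.
Proof.
move=> f'0 t /andP[t0 t1].
have [||c _] := @MVT_segment R f (fun _ => 0) 0 t t0.
- move=> y; rewrite in_itv /= => /andP[y0 yt]; apply: f'0; apply/andP; lra.
- apply: continuous_in_subspaceT => y; rewrite inE /= in_itv /= => /andP[y0 yt].
  have [dy _] := f'0 y ltac:(apply/andP; lra).
  exact/differentiable_continuous/derivable1_diffP.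
- by rewrite mul0r => /eqP; rewrite subr_eq0 => /eqP.
Qed.

Lemma is_derive_1B (x : R) : is_derive x (1 : R) (fun y : R => 1 - y) (-1).
Proof.
have -> : (fun y : R => 1 - y) = cst 1 - id by apply/funext.
by apply: is_derive_eq; rewrite sub0r.
Qed.

End PowerSeriesOnUnitInterval.

Section LogarithmicSeries.
Variable R : realType.

(* Coefficients of  sum_(n >= 1) t^n / n  (the degree-0 coefficient is 0). *)
Definition log_coef (n : nat) : R := n%:R^-1.

Lemma log_coef_diffs : pseries_diffs log_coef = fun=> 1.
Proof.
by apply/funext => n; rewrite /pseries_diffs /log_coef mulfV // pnatr_eq0.
Qed.

Lemma log_coef_cvg : pseries_cvg01 log_coef.
Proof.
move=> K /andP[K0 K1].
apply: (@series_le_cvg _ _ (geometric 1 K)) => [n|n|n|].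
- by rewrite mulr_ge0 ?exprn_ge0 // /log_coef invr_ge0.
- by rewrite /geometric /= mul1r exprn_ge0.
- rewrite /geometric /= mul1r ler_piMl ?exprn_ge0 //.
  by case: n => [|n]; rewrite /log_coef ?invr0 // invf_le1 ?ltr0n // ler1n.
- by apply: is_cvg_geometric_series; rewrite ger0_norm.
Qed.

Lemma log_coef_diffs_cvg : pseries_cvg01 (pseries_diffs log_coef).
Proof.
move=> K /andP[K0 K1]; rewrite log_coef_diffs.
by apply: (@is_cvg_geometric_series R 1 K); rewrite ger0_norm.
Qed.

Lemma log_coef_diffs2_cvg : pseries_cvg01 (pseries_diffs (pseries_diffs log_coef)).
Proof.
move=> K /andP[K0 K1]; rewrite log_coef_diffs.
apply: (@cvg_series_ratio _ _ K 2) => // [n|n _].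
- by rewrite /pseries_diffs mulr_ge0 ?exprn_ge0 // mulr_ge0.
- rewrite /pseries_diffs /= exprS -!natr1 le_eqVlt; apply/orP; left.
  by apply/eqP; ring.
Qed.

(* sum_(n >= 1) t^n / n = - ln (1 - t) on [0, 1): the sum of the series and
   of  ln (1 - t)  has derivative  1/(1 - t) - 1/(1 - t) = 0  and vanishes at 0. *)
Lemma log_series (t : R) : 0 <= t < 1 -> limn (pseries log_coef t) = - ln (1 - t).
Proof.
move=> t01.
pose F x := limn (pseries log_coef x).
pose g := F + ((@ln R) \o (fun y : R => 1 - y)).
have g'0 (x : R) : 0 <= x < 1 -> is_derive x (1 : R) g 0.
  move=> /[dup] x01 /andP[x0 x1].
  have dF := pseries_derive01 log_coef_cvg log_coef_diffs_cvg
    log_coef_diffs2_cvg x01.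
  have dln : is_derive (1 - x) (1 : R) (@ln R) (1 - x)^-1.
    by apply: is_derive1_ln; rewrite subr_gt0.
  have := is_deriveD dF
    (@is_derive1_comp R (@ln R) (fun y => 1 - y) x _ _ dln (is_derive_1B x)).
  have -> : limn (pseries (pseries_diffs log_coef) x) = (1 - x)^-1.
    rewrite log_coef_diffs; apply: cvg_lim => //.
    have := @cvg_geometric_series R 1 x; rewrite mul1r; apply.
    by rewrite ger0_norm.
  by move=> dg; apply: (is_derive_eq dg); rewrite mulrN1 subrr.
have := derive0_const01 g'0 t01.
change (F t + ln (1 - t) = F 0 + ln (1 - 0) -> F t = - ln (1 - t)).
rewrite /F pseries_at0 /log_coef invr0 subr0 ln1 addr0 => /eqP.
by rewrite addr_eq0 => /eqP.
Qed.

Lemma esum_log_series (t : R) : 0 <= t < 1 ->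
  (\esum_(m in [set: nat]) ((m.+1%:R^-1 * t ^+ m.+1)%R)%:E)%E = (- ln (1 - t))%:E.
Proof.
move=> /[dup] t01 /andP[t0 _].
have u00 : log_coef 0 * t ^+ 0 = 0 by rewrite /log_coef invr0 mul0r.
have [cvg_shift lim_shift] := series_drop0 u00 (log_coef_cvg t01).
rewrite (@esum_nat_lim R (fun m => log_coef m.+1 * t ^+ m.+1)) //.
  by rewrite lim_shift log_series.
by move=> n; rewrite mulr_ge0 ?exprn_ge0 // /log_coef invr_ge0.
Qed.

End LogarithmicSeries.

Section BinomialSeries.
Variables (R : realType) (s : R).
Hypothesis s_gt0 : 0 < s.

(* Coefficients binom(s + n - 1, n) of  (1 - t)^(-s) = sum_n binom(s+n-1, n) t^n. *)
Definition binom_coef (n : nat) : R := gbinom (s + n%:R - 1) n.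

Let s_addn_ge0 (n : nat) : 0 <= s + n%:R.
Proof. by rewrite addr_ge0 // ltW. Qed.

Lemma binom_coef0 : binom_coef 0 = 1.
Proof. by rewrite /binom_coef /gbinom big_ord0 fact0 divr1. Qed.

Lemma binom_coef_rec n : n.+1%:R * binom_coef n.+1 = (s + n%:R) * binom_coef n.
Proof.
rewrite /binom_coef /gbinom big_ord_recl factS natrM /= subr0.
have -> : \prod_(i < n) (s + n.+1%:R - 1 - (bump 0 i)%:R) =
          \prod_(i < n) (s + n%:R - 1 - i%:R).
  by apply: eq_bigr => i _; rewrite /bump /= add1n -!natr1; ring.
have n1_neq0 : (n.+1%:R : R) != 0 by rewrite pnatr_eq0.
have fact_neq0 : (n`!%:R : R) != 0 by rewrite pnatr_eq0 -lt0n fact_gt0.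
rewrite -natr1; field.
by rewrite natr1 n1_neq0 fact_neq0.
Qed.

Lemma binom_coef_ge0 n : 0 <= binom_coef n.
Proof.
elim: n => [|n IH]; first by rewrite binom_coef0.
rewrite -(@pmulr_rge0 _ n.+1%:R) ?ltr0n // binom_coef_rec.
by rewrite mulr_ge0 // addr_ge0 // ltW.
Qed.

Lemma binom_coef_diffs :
  pseries_diffs binom_coef = fun n => (s + n%:R) * binom_coef n.
Proof. by apply/funext => n; rewrite /pseries_diffs binom_coef_rec. Qed.

Lemma binom_coef_diffs2 : pseries_diffs (pseries_diffs binom_coef) =
  fun n => (s + n%:R + 1) * ((s + n%:R) * binom_coef n).
Proof.
apply/funext => n; rewrite binom_coef_diffs /pseries_diffs mulrCA.
by rewrite binom_coef_rec -natr1 addrA.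
Qed.

Lemma binom_coef_cvg : pseries_cvg01 binom_coef.
Proof.
move=> K /andP[K0 K1].
apply: (cvg_series_ratio _ K0 K1 (ltW s_gt0)) => [n|n _].
- exact: mulr_ge0 (binom_coef_ge0 n) (exprn_ge0 _ K0).
- rewrite /= exprS mulrA binom_coef_rec le_eqVlt; apply/orP; left.
  by apply/eqP; ring.
Qed.

Lemma binom_coef_diffs_cvg : pseries_cvg01 (pseries_diffs binom_coef).
Proof.
move=> K /andP[K0 K1]; rewrite binom_coef_diffs.
apply: (cvg_series_ratio _ K0 K1 (s_addn_ge0 1)) => [n|n _].
- apply: mulr_ge0 (exprn_ge0 _ K0).
  exact: mulr_ge0 (s_addn_ge0 n) (binom_coef_ge0 n).
- rewrite /= exprS.
  have -> : n.+1%:R * ((s + n.+1%:R) * binom_coef n.+1 * (K * K ^+ n)) =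
      (s + n.+1%:R) * (K * K ^+ n) * (n.+1%:R * binom_coef n.+1) by ring.
  rewrite binom_coef_rec -natr1 le_eqVlt; apply/orP; left.
  by apply/eqP; ring.
Qed.

Lemma binom_coef_diffs2_cvg :
  pseries_cvg01 (pseries_diffs (pseries_diffs binom_coef)).
Proof.
move=> K /andP[K0 K1]; rewrite binom_coef_diffs2.
apply: (cvg_series_ratio _ K0 K1 (s_addn_ge0 2)) => [n|n _].
- apply: mulr_ge0 (exprn_ge0 _ K0); apply: mulr_ge0; first exact: addr_ge0.
  exact: mulr_ge0 (s_addn_ge0 n) (binom_coef_ge0 n).
- rewrite /= exprS.
  have -> : n.+1%:R * ((s + n.+1%:R + 1) * ((s + n.+1%:R) * binom_coef n.+1) *
      (K * K ^+ n)) = (s + n.+1%:R + 1) * (s + n.+1%:R) * (K * K ^+ n) *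
      (n.+1%:R * binom_coef n.+1) by ring.
  rewrite binom_coef_rec -natr1 le_eqVlt; apply/orP; left.
  by apply/eqP; ring.
Qed.

(* The sum G of the binomial series solves  (1 - x) G'(x) = s G(x)  on [0, 1):
   this is the recursion of binom_coef read on the series. *)
Lemma binom_series_ode (x : R) : 0 <= x < 1 ->
  (1 - x) * limn (pseries (pseries_diffs binom_coef) x) =
  s * limn (pseries binom_coef x).
Proof.
move=> x01.
have cvg_G := binom_coef_cvg x01.
have cvg_G' := binom_coef_diffs_cvg x01.
have shifted := pseries_diffs_equiv cvg_G'.
have split_series : pseries (pseries_diffs binom_coef) x = (fun N =>
    s * pseries binom_coef x N +
    x * series (fun i => i%:R * binom_coef i * x ^+ i.-1) N).
  apply/funext => N; rewrite /pseries /series /= binom_coef_diffs.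
  rewrite !mulr_sumr -big_split /=; apply: eq_bigr => -[|i] _ /=; first by ring.
  by rewrite exprS; ring.
have G'_fix : limn (pseries (pseries_diffs binom_coef) x) =
    s * limn (pseries binom_coef x) +
    x * limn (pseries (pseries_diffs binom_coef) x).
  apply: cvg_lim => //; rewrite {1}split_series.
  apply: cvgD; apply: cvgM; try exact: cvg_cst.
  - exact: cvg_G.
  - exact: shifted.
by rewrite mulrBl mul1r {1}G'_fix; ring.
Qed.

(* sum_n binom(s+n-1, n) t^n = (1 - t)^(-s) on [0, 1): by binom_series_ode,
   (1 - x)^s G(x) has zero derivative, and it equals 1 at 0. *)
Lemma binomial_series (t : R) : 0 <= t < 1 ->
  limn (pseries binom_coef t) = ((1 - t) `^ s)^-1.
Proof.
move=> t01.
pose G x := limn (pseries binom_coef x).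
have h'0 (x : R) : 0 <= x < 1 ->
    is_derive x (1 : R) (((@powR R)^~ s \o (fun y : R => 1 - y)) * G) 0.
  move=> /[dup] x01 /andP[x0 x1].
  have dG := pseries_derive01 binom_coef_cvg binom_coef_diffs_cvg
    binom_coef_diffs2_cvg x01.
  have dpow : is_derive (1 - x) (1 : R) ((@powR R)^~ s) (s * (1 - x) `^ (s - 1)).
    by apply: is_derive1_powR; rewrite subr_gt0.
  have := is_deriveM (@is_derive1_comp R ((@powR R)^~ s) (fun y => 1 - y) x _ _
    dpow (is_derive_1B x)) dG.
  move=> dh; apply: (is_derive_eq dh).
  rewrite /= -(mulr_powRB1 (x := 1 - x)) ?subr_ge0 ?ltW // /GRing.scale /=.
  set P := (1 - x) `^ (s - 1).
  have -> : (1 - x) * P * limn (pseries (pseries_diffs binom_coef) x) +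
      limn (pseries binom_coef x) * (s * P * -1) =
      P * ((1 - x) * limn (pseries (pseries_diffs binom_coef) x) -
           s * limn (pseries binom_coef x)) by ring.
  by rewrite binom_series_ode // subrr mulr0.
have := derive0_const01 h'0 t01.
change ((1 - t) `^ s * G t = (1 - 0) `^ s * G 0 -> G t = ((1 - t) `^ s)^-1).
rewrite /G pseries_at0 binom_coef0 subr0 powR1 mulr1 => prod1.
have pow_neq0 : (1 - t) `^ s != 0.
  by rewrite gt_eqF // powR_gt0 // subr_gt0; case/andP: t01.
by apply: (mulfI pow_neq0); rewrite prod1 mulfV.
Qed.

Lemma esum_binomial_series (t : R) : 0 <= t < 1 ->
  (\esum_(n in [set: nat]) ((binom_coef n * t ^+ n)%R)%:E)%E =
  (((1 - t) `^ s)^-1)%:E.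
Proof.
move=> /[dup] t01 /andP[t0 _].
rewrite (@esum_nat_lim R (fun n => binom_coef n * t ^+ n)).
- by rewrite binomial_series.
- by move=> n; rewrite mulr_ge0 ?exprn_ge0 ?binom_coef_ge0.
- exact: binom_coef_cvg.
Qed.

End BinomialSeries.

Section NonnegativeSums.
Variable R : realType.
Local Open Scope ereal_scope.

Lemma esumZ_nat (k : R) (u : nat -> R) : (0 <= k)%R -> (forall n, 0 <= u n)%R ->
  \esum_(n in [set: nat]) ((k * u n)%R)%:E = k%:E * \esum_(n in [set: nat]) (u n)%:E.
Proof.
move=> k0 u0.
rewrite -!nneseries_esumT => [|n|n]; rewrite ?lee_fin ?mulr_ge0 //.
transitivity (\sum_(n <oo) (k%:E * (u n)%:E)).
  by congr (limn _); apply/funext => N; apply: eq_bigr => i _; rewrite EFinM.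
by rewrite nneseriesZl // => i _; rewrite lee_fin.
Qed.

Lemma esum_pair (T1 T2 : choiceType) (f : T1 * T2 -> \bar R) :
  (forall p, 0 <= f p) ->
  \esum_(p in [set: T1 * T2]) f p =
  \esum_(i in [set: T1]) \esum_(j in [set: T2]) f (i, j).
Proof.
move=> f0; rewrite (@esum_esum R T1 T2 setT (fun=> setT) (fun i j => f (i, j))) //.
have -> : [set: T1] `*`` (fun=> [set: T2]) = [set: T1 * T2] by apply/seteqP.
by apply: eq_esum => -[].
Qed.

Lemma esum_pair_swap (T1 T2 : choiceType) (f : T1 * T2 -> \bar R) :
  (forall p, 0 <= f p) ->
  \esum_(p in [set: T1 * T2]) f p =
  \esum_(j in [set: T2]) \esum_(i in [set: T1]) f (i, j).
Proof.
move=> f0.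
rewrite (reindex_esum [set: T2 * T1] _ (fun p => (p.2, p.1))).
  by rewrite (@esum_pair T2 T1 (fun p => f (p.2, p.1))).
split=> [p //|[a b] [c d] _ _ /= [-> ->] //|[a b] _]; by exists (b, a).
Qed.

Lemma esum_ord (n : nat) (g : 'I_n -> \bar R) : (forall j, 0 <= g j) ->
  \esum_(j in [set: 'I_n]) g j = \sum_(j < n) g j.
Proof.
move=> g0; rewrite esum_fset => [||i _]; [|exact: finite_finset|exact: g0].
rewrite fsbig_finite; last exact: finite_finset.
apply: perm_big; apply: uniq_perm.
- exact: finmap.fset_uniq.
- exact: index_enum_uniq.
move=> x; rewrite mem_index_enum in_fset_set; last exact: finite_finset.
exact/mem_set.
Qed.

Lemma esum_sumtype (T1 T2 : choiceType) (f : T1 + T2 -> \bar R) :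
  (forall p, 0 <= f p) ->
  \esum_(p in [set: T1 + T2]) f p =
  \esum_(i in [set: T1]) f (inl i) + \esum_(j in [set: T2]) f (inr j).
Proof.
move=> f0; rewrite (esumID (range inl)) => [|p _]; last exact: f0.
have -> : [set: T1 + T2] `&` ~` range inl = range inr.
  apply/seteqP; split=> -[x|x] //=.
  - by move=> [_ ninl]; exfalso; apply: ninl; exists x.
  - by move=> _; exists x.
  - by move=> [].
  - by move=> _; split=> // -[].
rewrite setTI (esum_image setT inl f) => [|x y _ _ []//].
by rewrite (esum_image setT inr f) => // x y _ _ [].
Qed.

Definition ffcons (r : nat) (p : nat * {ffun 'I_r -> nat}) : {ffun 'I_r.+1 -> nat} :=
  [ffun i => if unlift ord0 i is Some i' then p.2 i' else p.1].

Lemma ffcons_bij (r : nat) :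
  set_bij [set: nat * {ffun 'I_r -> nat}] [set: {ffun 'I_r.+1 -> nat}] (@ffcons r).
Proof.
split=> [//|[n1 k1] [n2 k2] _ _ /= eq_cons|k _].
- have := congr1 (fun k : {ffun 'I_r.+1 -> nat} => k ord0) eq_cons.
  rewrite /= !ffunE unlift_none /= => ->; congr (_, _); apply/ffunP => i.
  have := congr1 (fun k : {ffun 'I_r.+1 -> nat} => k (lift ord0 i)) eq_cons.
  by rewrite /= !ffunE liftK.
- exists (k ord0, [ffun i => k (lift ord0 i)]) => //.
  apply/ffunP => i; rewrite /ffcons ffunE.
  by case: (unliftP ord0 i) => [j ->|->] /=; rewrite ?ffunE.
Qed.

Lemma esum_prod_ffun (r : nat) (h : 'I_r -> nat -> R) (S : 'I_r -> R) (C : R) :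
  (0 <= C)%R -> (forall j n, 0 <= h j n)%R ->
  (forall j, \esum_(n in [set: nat]) (h j n)%:E = (S j)%:E) ->
  \esum_(k in [set: {ffun 'I_r -> nat}]) ((C * \prod_(j < r) h j (k j))%R)%:E =
  ((C * \prod_(j < r) S j)%R)%:E.
Proof.
elim: r h S C => [|r IH] h S C C0 h0 hS.
  have -> : [set: {ffun 'I_0 -> nat}] = [set [ffun i => 0%N]].
    by apply/seteqP; split=> k //= _; apply/ffunP => -[].
  by rewrite esum_set1 ?lee_fin !big_ord0 ?mulr1.
rewrite (reindex_esum _ _ _ _ (@ffcons_bij r)) esum_pair => [|p]; last first.
  by rewrite lee_fin mulr_ge0 // prodr_ge0.
transitivity (\esum_(n in [set: nat])
    (((C * \prod_(j < r) S (lift ord0 j)) * h ord0 n)%R)%:E).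
  apply: eq_esum => n _.
  rewrite (_ : (C * _ * h ord0 n)%R =
      (C * h ord0 n * \prod_(j < r) S (lift ord0 j))%R); last by ring.
  rewrite -(IH (fun j => h (lift ord0 j)) _ (C * h ord0 n)%R) ?mulr_ge0 //.
  apply: eq_esum => k _; congr (_ %:E).
  rewrite big_ord_recl /ffcons ffunE unlift_none /= -mulrA.
  by congr (_ * (_ * _))%R; apply: eq_bigr => i _; rewrite ffunE liftK.
rewrite esumZ_nat ?mulr_ge0 ?prodr_ge0 // => [|j _]; last first.
  by rewrite -lee_fin -hS; apply: esum_ge0 => n _; rewrite lee_fin.
by rewrite hS -EFinM big_ord_recl; congr (_ %:E); ring.
Qed.

End NonnegativeSums.

Section SquaredModulus.
Variable R : rcfType.
Local Open Scope complex_scope.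

Lemma cabs2_ge0 (a : R[i]) : 0 <= cabs2 a.
Proof. by rewrite /cabs2 addr_ge0 // sqr_ge0. Qed.

Lemma cabs2M (a b : R[i]) : cabs2 (a * b) = cabs2 a * cabs2 b.
Proof. by case: a => a1 a2; case: b => b1 b2; rewrite /cabs2 /=; ring. Qed.

Lemma cabs2_prod (I : Type) (s : seq I) (F : I -> R[i]) :
  cabs2 (\prod_(i <- s) F i) = \prod_(i <- s) cabs2 (F i).
Proof.
elim: s => [|x s IH]; first by rewrite !big_nil /cabs2 /=; ring.
by rewrite !big_cons cabs2M IH.
Qed.

Lemma cabs2X (a : R[i]) n : cabs2 (a ^+ n) = cabs2 a ^+ n.
Proof.
elim: n => [|n IH]; first by rewrite !expr0 /cabs2 /=; ring.
by rewrite !exprS cabs2M IH.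
Qed.

Lemma cabs2C (c : R) : cabs2 (c%:C) = c ^+ 2.
Proof. by rewrite /cabs2 /=; ring. Qed.

End SquaredModulus.

Lemma ln_prod (R : realType) (I : Type) (s : seq I) (F : I -> R) :
  (forall i, 0 < F i) -> ln (\prod_(i <- s) F i) = \sum_(i <- s) ln (F i).
Proof.
move=> F_gt0; elim: s => [|x s IH]; first by rewrite !big_nil ln1.
by rewrite !big_cons lnM ?posrE ?IH // prodr_gt0.
Qed.

Section Embedding.
Variables (R : realType) (r : nat) (mu : R) (z : 'I_r -> R[i]) (w : R[i]).
Hypothesis mu_gt0 : 0 < mu.
Hypothesis z_disc : forall j, cabs2 (z j) < 1.

Let z_unit j : 0 <= cabs2 (z j) < 1.
Proof. by rewrite cabs2_ge0 z_disc. Qed.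

Let P := \prod_(j < r) (1 - cabs2 (z j)) `^ mu.

Let P_gt0 : 0 < P.
Proof. by apply: prodr_gt0 => j _; rewrite powR_gt0 // subr_gt0. Qed.

Lemma cabs2_f_psi j m : cabs2 (f_emb mu z w (inl (j, m))) =
  mu * (m.+1%:R^-1 * cabs2 (z j) ^+ m.+1).
Proof.
rewrite /f_emb cabs2M cabs2C cabs2X exprMn exprVn.
by rewrite !sqr_sqrtr ?ler0n ?ltW // mulrA.
Qed.

Lemma cabs2_f_Psi (k : {ffun 'I_r -> nat}) b :
  cabs2 (f_emb mu z w (inr (k, b))) =
  b.+1%:R^-1 * cabs2 w ^+ b.+1 *
  \prod_(j < r) (binom_coef (mu * b.+1%:R) (k j) * cabs2 (z j) ^+ k j).
Proof.
have s_gt0 : 0 < mu * b.+1%:R by rewrite mulr_gt0.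
rewrite /f_emb !cabs2M cabs2C cabs2_prod cabs2X exprMn exprVn.
rewrite !sqr_sqrtr ?ler0n ?prodr_ge0 // => [|j _]; last exact: binom_coef_ge0.
under [in RHS]eq_bigr do rewrite -cabs2X.
by rewrite [in RHS]big_split /= /binom_coef; ring.
Qed.

Lemma esum_psi :
  (\esum_(p in [set: 'I_r * nat]) (cabs2 (f_emb mu z w (inl p)))%:E)%E =
  (- ln P)%:E.
Proof.
rewrite esum_pair => [|p]; last by rewrite lee_fin cabs2_ge0.
have psi_j j : (\esum_(m in [set: nat]) (cabs2 (f_emb mu z w (inl (j, m))))%:E)%E
    = (mu * - ln (1 - cabs2 (z j)))%:E.
  under eq_esum do rewrite cabs2_f_psi.
  rewrite esumZ_nat ?ltW // => [|n]; last first.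
    by rewrite mulr_ge0 ?exprn_ge0 ?cabs2_ge0.
  by rewrite (esum_log_series (z_unit j)) EFinM.
rewrite (eq_esum (fun j _ => psi_j j)) esum_ord => [|j]; last first.
  rewrite lee_fin; apply: mulr_ge0 (ltW mu_gt0) _.
  by rewrite oppr_ge0 ln_le0 // lerBlDr lerDl cabs2_ge0.
rewrite sumEFin /P ln_prod => [|j]; last by rewrite powR_gt0 // subr_gt0.
by rewrite -sumrN; congr (_%:E); apply: eq_bigr => j _; rewrite ln_powR mulrN.
Qed.

(* For fixed a = b+1, the Psi components sum to  t^a / a  with t = |w|^2 / P,
   since prod_j (1 - |z_j|^2)^(-mu a) = P^(-a). *)
Lemma esum_Psi_level b :
  (\esum_(k in [set: {ffun 'I_r -> nat}]) (cabs2 (f_emb mu z w (inr (k, b))))%:E)%E =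
  ((b.+1%:R^-1 * (cabs2 w / P) ^+ b.+1)%R)%:E.
Proof.
have s_gt0 : 0 < mu * b.+1%:R by rewrite mulr_gt0.
under eq_esum do rewrite cabs2_f_Psi.
rewrite (@esum_prod_ffun R r
  (fun j n => binom_coef (mu * b.+1%:R) n * cabs2 (z j) ^+ n)
  (fun j => ((1 - cabs2 (z j)) `^ (mu * b.+1%:R))^-1)).
- congr (_%:E); rewrite prodfV.
  have -> : \prod_(j < r) (1 - cabs2 (z j)) `^ (mu * b.+1%:R) = P ^+ b.+1.
    rewrite /P -prodrXl; apply: eq_bigr => j _.
    by rewrite powRrM powR_mulrn // powR_ge0.
  by rewrite expr_div_n mulrA.
- by rewrite mulr_ge0 ?invr_ge0 ?exprn_ge0 ?cabs2_ge0.
- by move=> j n; rewrite mulr_ge0 ?exprn_ge0 ?cabs2_ge0 ?binom_coef_ge0.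
- by move=> j; exact: esum_binomial_series.
Qed.

(* Summing over the levels a gives the logarithmic series in t. *)
Lemma esum_Psi : cabs2 w < P ->
  (\esum_(p in [set: {ffun 'I_r -> nat} * nat]) (cabs2 (f_emb mu z w (inr p)))%:E)%E =
  (- ln (1 - cabs2 w / P))%:E.
Proof.
move=> w_small.
rewrite esum_pair_swap => [|p]; last by rewrite lee_fin cabs2_ge0.
under eq_esum do rewrite esum_Psi_level.
apply: esum_log_series; rewrite divr_ge0 ?cabs2_ge0 ?ltW //=.
by rewrite ltr_pdivrMr // mul1r.
Qed.

End Embedding.

Lemma neg_ln_split (R : realType) (P y : R) : 0 <= y < P ->
  - ln P - ln (1 - y / P) = - ln (P - y).
Proof.
move=> /andP[y0 yP]; have P_gt0 : 0 < P by apply: le_lt_trans yP.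
have t_lt1 : 0 < 1 - y / P by rewrite subr_gt0 ltr_pdivrMr // mul1r.
rewrite -opprD -lnM ?posrE //; congr (- ln _).
by rewrite mulrBr mulr1 mulrCA divff ?mulr1 // gt_eqF.
Qed.

Theorem lemma5p1 (R : realType) (r : nat) (mu : R) :
  (1 <= r)%N -> 0 < mu ->
  forall (z : 'I_r -> R[i]) (w : R[i]),
    in_M mu z w ->
    (\esum_(i in [set: fidx r]%classic) (cabs2 (f_emb mu z w i))%:E)%E =
    (- ln (\prod_(j < r) (1 - cabs2 (z j)) `^ mu - cabs2 w))%:E.
Proof.
move=> _ mu_gt0 z w [z_disc w_small].
rewrite esum_sumtype => [|i]; last by rewrite lee_fin cabs2_ge0.
rewrite esum_psi // esum_Psi // -EFinD neg_ln_split //.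
by rewrite cabs2_ge0 w_small.
Qed.
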